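(* Any two disjoint non-wide $2$-way infinite $3$-monotone chains $A$ and $B$ are comparable (in one order or the other) by at least one of the three relations ''below'', ''above'', and ''to the left of''.
   Context: A curve is $x$-monotone if every vertical line meets it in at most one point. A $2$-way infinite $k$-monotone chain is a (possibly self-intersecting) continuous curve in the plane that is the union of $k$ consecutive $x$-monotone pieces, consecutive pieces sharing an endpoint, with the first and last pieces having unbounded projections to the $x$-axis. It is wide if it meets every vertical line, and non-wide otherwise. For a non-wide chain $A$, the complement $\mathbb R^2\setminus A$ has exactly one connected component containing a vertical line, its large component. $A$ is a right chain if $A$ lies to the right of the vertical lines contained in its large component, and a left chain otherwise. The left side of a right chain $A$ is its large component; the left side of a left chain $A$ is the union of all connected components of $\mathbb R^2\setminus A$ other than the large component. For non-wide chains $A,B$, $A$ is to the left of $B$ if $A$ together with the left side of $A$ is contained in the left side of $B$. For sets $A,B\subseteq\mathbb R^2$, $A$ is below (resp. above) $B$ if every vertical line meeting $A$ also meets $B$, and whenever $a\in A\cap\ell$, $b\in B\cap\ell$ for a vertical line $\ell$, the $y$-coordinate of $a$ is strictly smaller (resp. strictly larger) than that of $b$. *)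

From HB Require Import structures.
From mathcomp Require Import all_boot all_order all_algebra.
From mathcomp Require Import all_classical all_reals all_analysis.
Set Implicit Arguments. Unset Strict Implicit. Unset Printing Implicit Defensive.
Import Order.TTheory GRing.Theory Num.Theory.
Import numFieldNormedType.Exports.
Local Open Scope classical_set_scope.
Local Open Scope ring_scope.

Section Chains.
Variable R : realType.
Notation pt := (R * R)%type.

Definition vline (c : R) : set pt := [set p | p.1 = c].

(* graph of f over the x-domain D : an x-monotone curve when D is an
   interval and f is continuous on D *)
Definition graph_over (f : R -> R) (D : set R) : set pt :=
  [set p | D p.1 /\ p.2 = f p.1].

Definition ray (x : R) (dir : bool) : set R :=
  if dir then [set t | x <= t] else [set t | t <= x].

Definition seg (a b : R) : set R := [set t | Num.min a b <= t <= Num.max a b].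

(* A is a 2-way infinite 3-monotone chain: union of three consecutive
   x-monotone pieces (graphs of continuous functions over intervals),
   consecutive pieces sharing an endpoint, the first and last pieces
   having unbounded x-projections (closed rays). *)
Definition three_monotone_chain (A : set pt) : Prop :=
  exists (x1 x2 : R) (d1 d3 : bool) (f1 f2 f3 : R -> R),
    [/\ {within ray x1 d1, continuous f1},
        {within seg x1 x2, continuous f2},
        {within ray x2 d3, continuous f3},
        f1 x1 = f2 x1 /\ f2 x2 = f3 x2 &
        A = graph_over f1 (ray x1 d1) `|` graph_over f2 (seg x1 x2)
            `|` graph_over f3 (ray x2 d3)].

Definition wide (A : set pt) : Prop := forall c : R, A `&` vline c !=set0.
Definition non_wide (A : set pt) : Prop := ~ wide A.

(* the large component: the union of the connected components of the
   complement of A that contain a vertical line (for non-wide chains there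
   is exactly one such component) *)
Definition large_component (A : set pt) : set pt :=
  [set p | ~ A p /\ exists c, vline c `<=` connected_component (~` A) p].

Definition right_chain (A : set pt) : Prop :=
  forall c, vline c `<=` large_component A -> forall p, A p -> c < p.1.

Definition left_chain (A : set pt) : Prop := ~ right_chain A.

Definition left_side (A : set pt) : set pt :=
  [set p | (right_chain A /\ large_component A p) \/
           (left_chain A /\ ~ A p /\ ~ large_component A p)].

Definition to_the_left_of (A B : set pt) : Prop :=
  A `|` left_side A `<=` left_side B.

Definition below (A B : set pt) : Prop :=
  forall c, A `&` vline c !=set0 ->
    B `&` vline c !=set0 /\
    forall a b, A a -> B b -> a.1 = c -> b.1 = c -> a.2 < b.2.

Definition above (A B : set pt) : Prop :=
  forall c, A `&` vline c !=set0 ->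
    B `&` vline c !=set0 /\
    forall a b, A a -> B b -> a.1 = c -> b.1 = c -> a.2 > b.2.

End Chains.

From Pilot Require Import Defs.
From HB Require Import structures.
From mathcomp Require Import all_boot all_order all_algebra.
From mathcomp Require Import all_classical all_reals all_analysis.
From mathcomp Require Import lra.
Set Implicit Arguments. Unset Strict Implicit. Unset Printing Implicit Defensive.
Import Order.TTheory GRing.Theory Num.Theory.
Import numFieldNormedType.Exports.
Local Open Scope classical_set_scope.
Local Open Scope ring_scope.

(* A non-wide 3-monotone chain has its two unbounded pieces pointing the same
   way, so it is a "hairpin": the graphs of two continuous functions lo <= hi
   over a closed ray, meeting at the tip of the ray.  The complement of a
   hairpin consists of the outside of the closed region between the branches,
   which is the large component (it contains the vertical lines beyond the
   tip), and the open region between the branches; so the chain is a right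
   chain iff its ray points right.  For two disjoint hairpins, connectedness
   puts each one either outside the other's region or strictly between the
   other's branches.  In the nested case the regions are nested and one chain
   is to the left of the other.  Otherwise, if the rays point in opposite
   directions the left-pointing chain and its region avoid the region of the
   other one ("to the left of"); if they point the same way, the intermediate
   value theorem keeps one chain below the other over the common ray, which
   gives "below" or "above". *)

Lemma connected_sub_open_cover (T : topologicalType) (C U V : set T) :
  connected C -> open U -> open V -> C `<=` U `|` V -> C `&` U `&` V = set0 ->
  C `<=` U \/ C `<=` V.
Proof.
move=> cC oU oV CUV CUV0.
have [[x [Cx Ux]]|CU0] := pselect (C `&` U !=set0); last first.
  by right=> y Cy; case: (CUV y Cy) => // Uy; case: CU0; exists y.
left; suff <- : C `&` U = C by move=> y [].
apply: cC; first by exists x.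
  by exists U.
exists (~` V); first exact: open_closedC.
apply/seteqP; split=> y [Cy UVy]; split => //.
  by move=> Vy; have : (C `&` U `&` V) y by []; rewrite CUV0.
by case: (CUV y Cy).
Qed.

Lemma connected_nonzero_gt0 (R : realType) (T : topologicalType) (f : T -> R)
    (D : set T) (a b : T) :
  connected D -> {within D, continuous f} -> (forall t, D t -> f t != 0) ->
  D a -> D b -> 0 < f a -> 0 < f b.
Proof.
move=> cD cf f_neq0 Da Db fa_gt0; rewrite ltNge; apply/negP => fb_le0.
have /connected_intervalP f_itv := connected_continuous_connected cD cf.
have [t Dt ft0] : (f @` D) 0.
  by apply: (f_itv (f b) (f a)); [exists b|exists a|rewrite fb_le0 ltW].
by move/eqP: (f_neq0 t Dt).
Qed.

Lemma continuous_comp_within (T U V : topologicalType) (A : set U)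
    (f : U -> V) (g : T -> U) :
  {within A, continuous f} -> continuous g -> (forall z, A (g z)) ->
  continuous (f \o g).
Proof.
move=> /subspace_continuousP cf cg gA z; apply: cvg_comp (cf _ (gA z)).
rewrite withinE => W /= [B nB WB].
have gB : nbhs z (g @^-1` B) := cg z B nB.
apply: filterS gB => s /= Bgs.
have : (B `&` A) (g s) by split.
by rewrite -WB; case.
Qed.

Section Real.
Context {R : realType}.
Implicit Types (a b c t x : R) (d : bool) (f : R -> R).

Lemma open_fun_lt (T : topologicalType) (f g : T -> R) :
  continuous f -> continuous g -> open [set p | f p < g p].
Proof.
move=> cf cg; rewrite (_ : mkset _ = (fun p => g p - f p) @^-1` [set r | 0 < r]).
  apply: open_comp; last exact: open_gt.
  by move=> p _; apply: continuousB; [exact: cg|exact: cf].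
by apply/seteqP; split => p /=; rewrite subr_gt0.
Qed.

Lemma continuous_comp_fst (T : topologicalType) (f : R -> T) :
  continuous f -> continuous (fun p : R * R => f p.1).
Proof. by move=> cf p; apply: continuous_comp; [exact: cvg_fst|exact: cf]. Qed.

Lemma continuous_snd : continuous (fun p : R * R => p.2).
Proof. by move=> p; exact: cvg_snd. Qed.

Lemma connectedI_real (A B : set R) :
  connected A -> connected B -> connected (A `&` B).
Proof.
rewrite !connected_intervalP => iA iB x y [Ax Bx] [Ay By] z xzy.
by split; [exact: iA Ax Ay z xzy|exact: iB Bx By z xzy].
Qed.

Lemma connected_setT_real : connected [set: R].
Proof. by apply/connected_intervalP. Qed.

Lemma graph_over_connected f (D : set R) :
  continuous f -> connected D -> connected (graph_over f D).
Proof.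
move=> cf cD; have -> : graph_over f D = (fun t => (t, f t)) @` D.
  by apply/seteqP; split => [[x y] [/= Dx ->]|_ [t Dt <-]]; [exists x|].
apply: connected_continuous_connected => //; apply: continuous_subspaceT => t.
exact: (cvg_pair cvg_id (cf t)).
Qed.

Lemma vline_connected c : connected (Defs.vline c).
Proof.
have -> : Defs.vline c = (fun t : R => (c, t)) @` [set: R].
  by apply/seteqP; split => [[x y] /= <-|_ [t _ <-]] //; exists y.
apply: connected_continuous_connected; first exact: connected_setT_real.
by apply: continuous_subspaceT => t; exact: (cvg_pair (cvg_cst c) cvg_id).
Qed.

Lemma ray_refl x d : ray x d x.
Proof. by case: d => /=. Qed.

Lemma ray_connected x d : connected (ray x d).
Proof. by apply/connected_intervalP; case: d => y z /= ? ? t /andP[]; lra. Qed.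

Lemma open_ray_compl x d : open (~` ray x d).
Proof. by apply: closed_openC; case: d; [exact: closed_ge|exact: closed_le]. Qed.

Lemma ray_sub_total a b d : ray a d `<=` ray b d \/ ray b d `<=` ray a d.
Proof. by case: (leP a b) => ab; case: d; [right|left|left|right] => t /=; lra. Qed.

Lemma ray_common a b d : exists t, ray a d t /\ ray b d t.
Proof.
by case: (leP a b) => ab; case: d; [exists b|exists a|exists a|exists b] => /=; lra.
Qed.

Lemma ray_escape x d : exists c, ~ ray x d c.
Proof. by case: d; [exists (x - 1)|exists (x + 1)] => /=; lra. Qed.

Lemma ray_escape_opposite (a b : R) (da db : bool) :
  da != db -> exists t, ray a da t /\ ~ ray b db t.
Proof.
by case: da db => [] [] // _; case: (leP a b) => ab;
  [exists (b + 1)|exists a|exists (a - 1)|exists (b - 1)] => /=; lra.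
Qed.

Definition ray_proj x d t : R := if d then Num.max t x else Num.min t x.

Lemma ray_proj_continuous x d : continuous (ray_proj x d).
Proof.
case: d => t;
  [apply: (@continuous_max _ _ id (cst x))|apply: (@continuous_min _ _ id (cst x))];
  by [exact: cvg_id|exact: cvg_cst].
Qed.

Lemma ray_proj_mem x d t : ray x d (ray_proj x d t).
Proof. by case: d => /=; rewrite ?le_max ?ge_min lexx orbT. Qed.

Lemma ray_proj_id x d t : ray x d t -> ray_proj x d t = t.
Proof. by case: d => /= ?; [exact: max_l|exact: min_l]. Qed.

Lemma ray_proj_out x d t : ray x (~~ d) t -> ray_proj x d t = x.
Proof. by case: d => /= ?; [exact: max_r|exact: min_r]. Qed.

Lemma ray_total a b d : ray a d b \/ ray b d a.
Proof. by case: d; case: (leP a b) => ab; [left|right|right|left] => /=; lra. Qed.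

Lemma ray_dichotomy x d t : ray x d t \/ ray x (~~ d) t.
Proof. by case: d; case: (leP x t) => xt; [left|right|right|left] => /=; lra. Qed.

Lemma ray_flip a b d : ray a d b -> ray b (~~ d) a.
Proof. by case: d => /=. Qed.

Lemma ray_trans a b d t : ray a d b -> ray b d t -> ray a d t.
Proof. by case: d => /=; lra. Qed.

Lemma seg_ray a b d : ray a d b -> seg a b = ray a d `&` ray b (~~ d).
Proof.
move=> ab; apply/seteqP; split => t; rewrite /seg /=;
  case: d ab => /= ab; rewrite ?(min_l ab, max_r ab, min_r ab, max_l ab).
- by move=> /andP[]; lra.
- by move=> /andP[]; lra.
- by move=> [? ?]; apply/andP; split; lra.
- by move=> [? ?]; apply/andP; split; lra.
Qed.

Lemma seg_sym a b : seg a b = seg b a.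
Proof. by rewrite /seg minC maxC. Qed.

Lemma rays_seg_cover a b (da db : bool) t : da != db ->
  ray a da t \/ seg a b t \/ ray b db t.
Proof.
rewrite /seg; case: da db => [] [] //= _.
- case: (leP a t) => [|ta]; first by left.
  case: (leP t b) => [|bt]; first by right; right.
  by right; left; rewrite ge_min le_max (ltW bt) (ltW ta) orbT.
- case: (leP t a) => [|a_t]; first by left.
  case: (leP b t) => [|tb]; first by right; right.
  by right; left; rewrite ge_min le_max (ltW a_t) (ltW tb) orbT.
Qed.

End Real.

Section Hairpin.
Context {R : realType}.
Implicit Types (c t : R) (d : bool) (lo hi : R -> R) (p : R * R).

Definition hairpin (x0 : R) d lo hi : set (R * R) :=
  [set p | ray x0 d p.1 /\ (p.2 = lo p.1 \/ p.2 = hi p.1)].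

Definition hairpin_hull (x0 : R) d lo hi : set (R * R) :=
  [set p | ray x0 d p.1 /\ lo p.1 <= p.2 /\ p.2 <= hi p.1].

Record hairpin_spec (x0 : R) lo hi : Prop := HairpinSpec {
  hairpin_lo_cont : continuous lo;
  hairpin_hi_cont : continuous hi;
  hairpin_lo_le_hi : forall t, lo t <= hi t;
  hairpin_tip : lo x0 = hi x0 }.

Context {x0 : R} {d : bool} {lo hi : R -> R}.
Hypothesis hs : hairpin_spec x0 lo hi.

Local Notation H := (hairpin x0 d lo hi).
Local Notation K := (hairpin_hull x0 d lo hi).

Lemma hairpin_lo_mem t : ray x0 d t -> H (t, lo t).
Proof. by split => //; left. Qed.

Lemma hairpin_hi_mem t : ray x0 d t -> H (t, hi t).
Proof. by split => //; right. Qed.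

Lemma hull_compl_at t y : ray x0 d t -> ~ K (t, y) -> y < lo t \/ hi t < y.
Proof.
move=> rt nK; case: (ltP y (lo t)) => [|lo_y]; first by left.
by case: (ltP (hi t) y) => [|y_hi]; [right|case: nK].
Qed.

Lemma hairpin_sub_hull : H `<=` K.
Proof.
move=> p [rp eq_p]; have := hairpin_lo_le_hi hs p.1.
by split => //; case: eq_p => ->; lra.
Qed.

Lemma hull_complE : ~` K =
  fst @^-1` (~` ray x0 d) `|` [set p | p.2 < lo p.1] `|` [set p | hi p.1 < p.2].
Proof.
apply/seteqP; split => p /=; last first.
  by move=> [[nrp|?]|?] [rp ?]; [exact: nrp|lra|lra].
move=> nKp; have [rp|] := pselect (ray x0 d p.1); last by left; left.
case: (ltP p.2 (lo p.1)) => [|lo_p]; first by left; right.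
case: (ltP (hi p.1) p.2) => [|p_hi]; first by right.
by case: nKp.
Qed.

Lemma hull_minus_hairpinE :
  K `\` H = [set p | ~ ray x0 (~~ d) p.1 /\ lo p.1 < p.2 /\ p.2 < hi p.1].
Proof.
have tip := hairpin_tip hs; apply/seteqP; split => p /=.
  move=> [[rp [lo_p p_hi]] nHp].
  have [ne_lo ne_hi] : p.2 <> lo p.1 /\ p.2 <> hi p.1.
    by split=> e; apply: nHp; split; tauto.
  split; last lra.
  move=> rnp; have p1E : p.1 = x0 by move: rp rnp; case: d => /=; lra.
  by rewrite p1E in lo_p p_hi ne_lo; lra.
move=> [nrp lo_p_hi]; split; last by move=> [_]; lra.
by split; [move: nrp; case: d => /=; lra|lra].
Qed.

Lemma open_hull_compl : open (~` K).
Proof.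
have [lo_c hi_c _ _] := hs; rewrite hull_complE.
apply: openU; first apply: openU.
- by apply: open_comp; [move=> p _; exact: cvg_fst|exact: open_ray_compl].
- exact: open_fun_lt continuous_snd (continuous_comp_fst lo_c).
- exact: open_fun_lt (continuous_comp_fst hi_c) continuous_snd.
Qed.

Lemma open_hull_minus_hairpin : open (K `\` H).
Proof.
have [lo_c hi_c _ _] := hs; rewrite hull_minus_hairpinE.
rewrite (_ : mkset _ = fst @^-1` (~` ray x0 (~~ d)) `&`
  [set p | lo p.1 < p.2] `&` [set p | p.2 < hi p.1]); last first.
  by apply/seteqP; split => p /=; tauto.
apply: openI; first apply: openI.
- by apply: open_comp; [move=> p _; exact: cvg_fst|exact: open_ray_compl].
- exact: open_fun_lt (continuous_comp_fst lo_c) continuous_snd.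
- exact: open_fun_lt continuous_snd (continuous_comp_fst hi_c).
Qed.

Lemma hairpin_connected : connected H.
Proof.
have [lo_c hi_c _ tip] := hs.
have -> : H = graph_over lo (ray x0 d) `|` graph_over hi (ray x0 d).
  by apply/seteqP; split => p; rewrite /hairpin /graph_over /=; tauto.
apply: connectedU.
- by exists (x0, lo x0); split; split => //=; rewrite ?tip; exact: ray_refl.
- by apply: (graph_over_connected lo_c); exact: ray_connected.
- by apply: (graph_over_connected hi_c); exact: ray_connected.
Qed.

Lemma connected_hairpin_compl_dichotomy (C : set (R * R)) :
  connected C -> C `<=` ~` H -> C `<=` ~` K \/ C `<=` K `\` H.
Proof.
move=> cC CnH; apply: connected_sub_open_cover => //.
- exact: open_hull_compl.
- exact: open_hull_minus_hairpin.
- move=> p Cp; have [Kp|] := pselect (K p); [right; split|left] => //.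
  exact: CnH.
- by apply/seteqP; split => p // [[_ nKp] []].
Qed.

Lemma vline_sub_hull_compl c : ~ ray x0 d c -> Defs.vline c `<=` ~` K.
Proof. by move=> nrc [x y]; rewrite /Defs.vline /= => -> [/nrc]. Qed.

Lemma hull_compl_connected_to_vline p :
  ~ K p -> exists c, Defs.vline c `<=` connected_component (~` H) p.
Proof.
have [lo_c hi_c _ _] := hs; move=> nKp.
suff [C [cC CnK Cp [c lineC]]] : exists C, [/\ connected C, C `<=` ~` K, C p &
    exists c, Defs.vline c `<=` C].
  exists c; apply: subset_trans lineC _; apply: connected_component_max => //.
  by move=> q /CnK nKq Hq; apply/nKq/hairpin_sub_hull.
have [rp|nrp] := pselect (ray x0 d p.1); last first.
  exists (Defs.vline p.1); split => //; [exact: vline_connected| |by exists p.1].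
  exact: vline_sub_hull_compl.
have [c nrc] := ray_escape x0 d.
(* A translate of a branch through [p] avoids the hull and crosses [vline c]. *)
have shifted f e : continuous f -> (forall t, ~ K (t, f t + e)) ->
    p.2 = f p.1 + e -> exists C, [/\ connected C, C `<=` ~` K, C p &
    exists c, Defs.vline c `<=` C].
  move=> cf nK pE; exists (graph_over (fun t => f t + e) setT `|` Defs.vline c).
  split; last by exists c => q; right.
  - apply: connectedU; first by exists (c, f c + e).
      by apply: (graph_over_connected (f := fun t => f t + e)) => [t|];
        [apply: continuousD; [exact: cf|exact: cvg_cst]|exact: connected_setT_real].
    exact: vline_connected.
  - move=> [x y] [[_ /= yE]|]; last exact: vline_sub_hull_compl.
    by rewrite yE; exact: nK.
  - by left; split.
case: (ltP p.2 (lo p.1)) => [lt_lo|ge_lo].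
  by apply: (shifted lo (p.2 - lo p.1)) => // [t [_ /= ?]|]; lra.
case: (ltP (hi p.1) p.2) => [gt_hi|le_hi]; last by case: nKp.
by apply: (shifted hi (p.2 - hi p.1)) => // [t [_ /= ?]|]; lra.
Qed.

Lemma large_component_hairpin : large_component H = ~` K.
Proof.
apply/seteqP; split => p; last first.
  move=> nKp; split; first by move=> /hairpin_sub_hull.
  exact: hull_compl_connected_to_vline.
move=> [nHp [c lineC]].
have cC : connected (connected_component (~` H) p) by exact: component_connected.
have [CnK|CKH] := connected_hairpin_compl_dichotomy cC (@connected_component_sub _ _ p).
  by apply: CnK; exact: connected_component_refl.
have [rc|nrc] := pselect (ray x0 d c).
  by case: (CKH (c, lo c) (lineC (c, lo c) erefl)) => _ []; split => //; left.
by have [[]] := CKH (c, 0) (lineC (c, 0) erefl).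
Qed.

Lemma right_chain_hairpin : right_chain H <-> d.
Proof.
rewrite /right_chain large_component_hairpin; split.
  have [c nrc] := ray_escape x0 d.
  move=> /(_ c (vline_sub_hull_compl nrc) (x0, lo x0)) right_c.
  have /= lt_c : c < x0 by apply/right_c/hairpin_lo_mem/ray_refl.
  by case: d nrc {right_c} => //= /(_ (ltW lt_c)).
move=> dT c lineK p [rp _]; rewrite ltNge; apply/negP => le_pc.
apply: (lineK (c, lo c) erefl); split => /=; last by have := hairpin_lo_le_hi hs c; lra.
by move: rp; rewrite dT /=; lra.
Qed.

Lemma left_side_hairpin : left_side H = if d then ~` K else K `\` H.
Proof.
have rcE : right_chain H = d by apply/propext; exact: right_chain_hairpin.
rewrite /left_side /left_chain rcE large_component_hairpin.
apply/seteqP; case: d {rcE}; split => p /=.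
- by case=> [[]|[]].
- by left.
- by case=> [[]|[_ [nHp /contrapT]]].
- by move=> [Kp nHp]; right; split=> //; split=> // /(_ Kp).
Qed.

End Hairpin.

Definition comparable_chains {R : realType} (A B : set (R * R)) : Prop :=
  below A B \/ below B A \/ above A B \/ above B A \/
  to_the_left_of A B \/ to_the_left_of B A.

Lemma comparable_chainsC {R : realType} (A B : set (R * R)) :
  comparable_chains A B -> comparable_chains B A.
Proof. by rewrite /comparable_chains; tauto. Qed.

Section TwoHairpins.
Context {R : realType} {xA xB : R} {dA dB : bool} {loA hiA loB hiB : R -> R}.
Hypotheses (hA : hairpin_spec xA loA hiA) (hB : hairpin_spec xB loB hiB).

Local Notation HA := (hairpin xA dA loA hiA).
Local Notation KA := (hairpin_hull xA dA loA hiA).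
Local Notation HB := (hairpin xB dB loB hiB).
Local Notation KB := (hairpin_hull xB dB loB hiB).

Lemma hairpin_sub_hull_dir : HA `<=` KB -> dA = dB.
Proof.
move=> AB; apply/eqP; apply: contraT => dAB.
have [t [rA nrB]] := ray_escape_opposite xA xB dAB.
by have [/nrB] := AB _ (hairpin_lo_mem rA).
Qed.

Lemma hull_sub_hull : HA `<=` KB -> KA `<=` KB.
Proof.
move=> AB [x y] [/= rx lo_y_hi].
have [/= rBx ?] := AB _ (hairpin_lo_mem rx).
have [/= _ ?] := AB _ (hairpin_hi_mem rx).
by split => //=; lra.
Qed.

Lemma hull_minus_hairpins_exclusive :
  HA `<=` KB `\` HB -> HB `<=` KA `\` HA -> False.
Proof.
move=> AB BA; have dAB : dA = dB by apply: hairpin_sub_hull_dir => p /AB [].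
rewrite (hull_minus_hairpinE hB) in AB; rewrite (hull_minus_hairpinE hA) in BA.
have [/= nrA _] := AB _ (hairpin_lo_mem (ray_refl xA dA)).
have [/= nrB _] := BA _ (hairpin_lo_mem (ray_refl xB dB)).
by move: nrA nrB; rewrite dAB; case: dB => /=; lra.
Qed.

Lemma hulls_separated_at x : HA `<=` ~` KB -> HB `<=` ~` KA ->
  ray xA dA x -> ray xB dB x -> hiA x < loB x \/ hiB x < loA x.
Proof.
move=> AB BA rA rB.
have := hull_compl_at rB (AB _ (hairpin_lo_mem rA)).
have := hull_compl_at rB (AB _ (hairpin_hi_mem rA)).
have := hull_compl_at rA (BA _ (hairpin_lo_mem rB)).
have := hull_compl_at rA (BA _ (hairpin_hi_mem rB)).
have := hairpin_lo_le_hi hA x; have := hairpin_lo_le_hi hB x.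
lra.
Qed.

Lemma hairpin_below_propagates x1 x : HA `&` HB = set0 ->
  ray xA dA x1 -> ray xB dB x1 -> hiA x1 < loB x1 ->
  ray xA dA x -> ray xB dB x -> hiA x < loB x.
Proof.
move=> AB0 rA1 rB1 lt1 rA rB; rewrite -subr_gt0.
have [_ hiA_c _ _] := hA; have [loB_c _ _ _] := hB.
apply: (connected_nonzero_gt0 (f := fun t => loB t - hiA t)
  (D := ray xA dA `&` ray xB dB) (a := x1)) => //; last by rewrite subr_gt0.
- by apply: connectedI_real; exact: ray_connected.
- apply: continuous_subspaceT => t.
  by apply: continuousB; [exact: loB_c|exact: hiA_c].
- move=> t [rAt rBt]; rewrite subr_eq0; apply/eqP => e.
  have : (HA `&` HB) (t, hiA t).
    by split; [exact: hairpin_hi_mem|rewrite -e; exact: hairpin_lo_mem].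
  by rewrite AB0.
Qed.

Lemma comparable_of_below : dA = dB ->
  (forall x, ray xA dA x -> ray xB dB x -> hiA x < loB x) ->
  comparable_chains HA HB.
Proof.
move=> dAB lt_AB.
have lt_pts a b : HA a -> HB b -> a.1 = b.1 -> a.2 < b.2.
  case: a b => [x ya] [x' yb] [/= rA eA] [/= rB eB] /= e; subst x'.
  have := lt_AB x rA rB; have := hairpin_lo_le_hi hA x.
  have := hairpin_lo_le_hi hB x.
  by case: eA => ->; case: eB => ->; lra.
case: (ray_sub_total xA xB dB) => sub; [left|do 3 right; left];
  move=> c [[x y] [[/= rx _] /= xc]]; split.
- by exists (c, loB c); split => //; apply/hairpin_lo_mem/sub; rewrite -xc -dAB.
- by move=> a b Aa Bb ac bc; apply: lt_pts => //; rewrite ac bc.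
- exists (c, loA c); split => //; apply/hairpin_lo_mem.
  by rewrite dAB; apply/sub; rewrite -xc.
- by move=> a b Ba Ab ac bc; apply: lt_pts => //; rewrite ac bc.
Qed.

Lemma comparable_nested : HA `&` HB = set0 -> HA `<=` KB `\` HB ->
  comparable_chains HA HB.
Proof.
move=> AB0 AB; have AKB p : HA p -> KB p by move=> /AB [].
have dAB := hairpin_sub_hull_dir AKB.
have BnKA : HB `<=` ~` KA.
  have BnA : HB `<=` ~` HA by move=> p Bp Ap; have : (HA `&` HB) p by []; rewrite AB0.
  have [//|BA] := connected_hairpin_compl_dichotomy hA (hairpin_connected hB) BnA.
  by case: (hull_minus_hairpins_exclusive AB BA).
have KAB := hull_sub_hull AKB.
rewrite /comparable_chains /to_the_left_of !left_side_hairpin //.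
rewrite -dAB in AB BnKA KAB *.
move: AB BnKA KAB; case: dA {dAB AKB} => /= AB BnKA KAB; [do 5 right|do 4 right; left].
- by move=> p [Bp|nKBp KAp]; [exact: BnKA|exact/nKBp/KAB].
- move=> p [/AB //|[KAp nHAp]]; split; first exact: KAB.
  by move=> /BnKA.
Qed.

Lemma left_of_opposite_hairpins : dA -> ~~ dB ->
  HA `<=` ~` KB -> HB `<=` ~` KA -> to_the_left_of HB HA.
Proof.
move=> dAT dBF AB BA.
rewrite /to_the_left_of !left_side_hairpin // (ifN _ _ dBF) (ifT _ _ dAT).
move=> p [Bp|[[rB lo_B_hi] _] [rA lo_A_hi]]; first exact: BA.
by case: (hulls_separated_at AB BA rA rB); lra.
Qed.

End TwoHairpins.

Section ComparableHairpins.
Context {R : realType} {xA xB : R} {dA dB : bool} {loA hiA loB hiB : R -> R}.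
Hypotheses (hA : hairpin_spec xA loA hiA) (hB : hairpin_spec xB loB hiB).

Local Notation HA := (hairpin xA dA loA hiA).
Local Notation KA := (hairpin_hull xA dA loA hiA).
Local Notation HB := (hairpin xB dB loB hiB).
Local Notation KB := (hairpin_hull xB dB loB hiB).

Lemma comparable_separated_hairpins : HA `&` HB = set0 ->
  HA `<=` ~` KB -> HB `<=` ~` KA -> comparable_chains HA HB.
Proof.
move=> AB0 AB BA; have [dAB|dAB] := eqVneq dA dB.
  have [x1 [rA1 rB1]] := ray_common xA xB dA; rewrite dAB in rB1.
  case: (hulls_separated_at hA hB AB BA rA1 rB1) => lt1.
    apply: comparable_of_below => // x rA rB.
    exact: (hairpin_below_propagates hA hB AB0 rA1 rB1 lt1).
  apply/comparable_chainsC/comparable_of_below => // x rB rA.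
  by apply: (hairpin_below_propagates hB hA _ rB1 rA1 lt1); rewrite // setIC.
move: AB BA; case: dA dAB => [] /= dBF AB BA.
- by do 5 right; apply: left_of_opposite_hairpins.
- by do 4 right; left; apply: left_of_opposite_hairpins => //; case: dB dBF.
Qed.

Lemma comparable_hairpins : HA `&` HB = set0 -> comparable_chains HA HB.
Proof.
move=> AB0.
have AnB : HA `<=` ~` HB by move=> p Ap Bp; have : (HA `&` HB) p by []; rewrite AB0.
have BnA : HB `<=` ~` HA by move=> p Bp /AnB.
have [AnKB|AB] := connected_hairpin_compl_dichotomy hB (hairpin_connected hA) AnB;
  last exact: comparable_nested.
have [BnKA|BA] := connected_hairpin_compl_dichotomy hA (hairpin_connected hB) BnA;
  last by apply/comparable_chainsC/comparable_nested; rewrite // setIC.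
exact: comparable_separated_hairpins.
Qed.

End ComparableHairpins.

Section Representation.
Context {R : realType}.
Implicit Types (a b t x : R) (d : bool).

Lemma three_pieces_hairpin x1 x2 d (f1 f2 f3 : R -> R) : ray x1 d x2 ->
  {within ray x1 d, continuous f1} -> {within seg x1 x2, continuous f2} ->
  {within ray x2 d, continuous f3} -> f1 x1 = f2 x1 -> f2 x2 = f3 x2 ->
  exists G1 G2, [/\ continuous G1, continuous G2, G1 x1 = G2 x1 &
    graph_over f1 (ray x1 d) `|` graph_over f2 (seg x1 x2)
    `|` graph_over f3 (ray x2 d) = hairpin x1 d G1 G2].
Proof.
move=> r12 cf1 cf2 cf3 e1 e2; rewrite (seg_ray r12) in cf2 *.
set sp := fun t => ray_proj x2 (~~ d) (ray_proj x1 d t).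
have sp_mem t : (ray x1 d `&` ray x2 (~~ d)) (sp t).
  have := ray_proj_mem x1 d t; rewrite /sp; set s := ray_proj x1 d t => r1s.
  have [r2s|r2s] := ray_dichotomy x2 d s.
    by rewrite ray_proj_out ?negbK //; split => //; exact: ray_refl.
  by rewrite ray_proj_id.
have sp_id t : (ray x1 d `&` ray x2 (~~ d)) t -> sp t = t.
  by move=> [r1t r2t]; rewrite /sp !ray_proj_id.
have sp_x2 t : ray x2 d t -> sp t = x2.
  by move=> r2t; rewrite /sp (ray_proj_id (ray_trans r12 r2t)) ray_proj_out ?negbK.
(* [sp] clamps to the segment; each summand of [G2] is constant on the
   other piece, so [G2] is [f2] up to [x2] and [f3] beyond. *)
set G2 := fun t => f2 (sp t) + f3 (ray_proj x2 d t) - f3 x2.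
have G2_seg t : ray x2 (~~ d) t -> G2 t = f2 (sp t).
  by move=> r2t; rewrite /G2 ray_proj_out //; lra.
have G2_ray t : ray x2 d t -> G2 t = f3 t.
  by move=> r2t; rewrite /G2 sp_x2 // ray_proj_id // e2; lra.
exists (f1 \o ray_proj x1 d), G2; split.
- by apply: (continuous_comp_within cf1 _ (ray_proj_mem x1 d)); exact: ray_proj_continuous.
- move=> t; apply: (@continuousB _ _ _ (fun s => f2 (sp s) + f3 (ray_proj x2 d s))
    (cst (f3 x2))); last exact: cvg_cst.
  apply: (@continuousD _ _ _ (f2 \o sp) (f3 \o ray_proj x2 d)).
  + apply: (continuous_comp_within cf2 _ sp_mem) => s.
    by apply: continuous_comp; exact: ray_proj_continuous.
  + apply: (continuous_comp_within cf3 _ (ray_proj_mem x2 d)).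
    exact: ray_proj_continuous.
- have x1_seg : (ray x1 d `&` ray x2 (~~ d)) x1.
    by split; [exact: ray_refl|exact: ray_flip].
  by rewrite G2_seg ?sp_id /= ?ray_proj_id //; [exact: ray_refl|case: x1_seg].
apply/seteqP; split => [[x y]|[x y] [/= rx]]; rewrite /graph_over /=.
- move=> [[[rx ->]|[[rx r2x] ->]]|[r2x ->]]; split => //.
  + by left; rewrite /= ray_proj_id.
  + by right; rewrite G2_seg // sp_id.
  + exact: ray_trans r12 r2x.
  + by right; rewrite G2_ray.
- move=> [->|->]; first by left; left; rewrite /= ray_proj_id.
  have [r2x|r2x] := ray_dichotomy x2 d x; first by right; rewrite G2_ray.
  by left; right; split => //; rewrite G2_seg // sp_id.
Qed.

Lemma hairpin_sorted x0 d (G1 G2 : R -> R) :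
  continuous G1 -> continuous G2 -> G1 x0 = G2 x0 ->
  exists lo hi, hairpin_spec x0 lo hi /\ hairpin x0 d G1 G2 = hairpin x0 d lo hi.
Proof.
move=> c1 c2 e; exists (G1 \min G2), (G1 \max G2); split.
  split => [t|t|t|/=].
  - by apply: continuous_min; [exact: c1|exact: c2].
  - by apply: continuous_max; [exact: c1|exact: c2].
  - by rewrite /= le_max !ge_min !lexx.
  - by rewrite e minxx maxxx.
apply/seteqP; split => -[x y] [rx] /= eq_y; split => //=; move: eq_y;
  case: (leP (G1 x) (G2 x)) => G12;
  rewrite ?(min_l G12, max_r G12, min_r (ltW G12), max_l (ltW G12)); tauto.
Qed.

Lemma three_monotone_chain_hairpin (A : set (R * R)) :
  three_monotone_chain A -> non_wide A ->
  exists x0 d lo hi, hairpin_spec x0 lo hi /\ A = hairpin x0 d lo hi.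
Proof.
move=> [x1 [x2 [d [d3 [f1 [f2 [f3 [cf1 cf2 cf3 [e1 e2] ->]]]]]]]] nw.
have d3E : d3 = d.
  apply/eqP; apply: contraT; rewrite eq_sym => dd3; case: nw => c.
  have [rc|[sc|rc]] := rays_seg_cover x1 x2 c dd3.
  - by exists (c, f1 c); split => //; left; left.
  - by exists (c, f2 c); split => //; left; right.
  - by exists (c, f3 c); split => //; right.
subst d3; clear nw; wlog r12 : x1 x2 f1 f3 cf1 cf2 cf3 e1 e2 / ray x1 d x2.
  move=> gen; have [|r21] := ray_total x1 x2 d; first exact: gen.
  rewrite setUC (setUC (graph_over f1 _)) setUA seg_sym.
  by apply: (gen x2 x1 f3 f1) => //; rewrite seg_sym.
have [G1 [G2 [c1 c2 e ->]]] := three_pieces_hairpin r12 cf1 cf2 cf3 e1 e2.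
have [lo [hi [hs ->]]] := hairpin_sorted d c1 c2 e.
by exists x1, d, lo, hi.
Qed.

End Representation.

Unset Implicit Arguments.

Theorem lemma8 (R : realType) (A B : set (R * R)) :
  three_monotone_chain A -> three_monotone_chain B ->
  non_wide A -> non_wide B -> A `&` B = set0 ->
  below A B \/ below B A \/ above A B \/ above B A \/
  to_the_left_of A B \/ to_the_left_of B A.
Proof.
move=> tA tB /(three_monotone_chain_hairpin tA) [xA [dA [loA [hiA [hA ->]]]]].
move=> /(three_monotone_chain_hairpin tB) [xB [dB [loB [hiB [hB ->]]]]].
exact: comparable_hairpins.
Qed.
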